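(* Let $V$ be a finite dimensional real inner product space and let $X_1,\dots,X_n$ be self-adjoint elements of $\mathrm{End}(V)$ with $[X_i,X_j]=0$ for all $1\le i,j\le n$. Then there exists a constant $C>0$ such that for all $v\in V$ \[ C\Big(\sum_{i,j=1}^n\langle X_iv,v\rangle\langle X_jv,v\rangle\langle X_iv,X_jv\rangle\Big)^2\ \ge\ \Big(\sum_{i=1}^n\langle X_iv,v\rangle^2\Big)^3. \] *)

From HB Require Import structures.
From mathcomp Require Import all_boot all_order all_algebra.
Set Implicit Arguments. Unset Strict Implicit. Unset Printing Implicit Defensive.
Import Order.TTheory GRing.Theory Num.Theory.
Local Open Scope ring_scope.

(* The model of a d-dimensional real inner product space: row vectors
   'rV[R]_d with the standard inner product <u, w> = sum_k u_k w_k. *)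
Definition ip (R : rcfType) (d : nat) (u w : 'rV[R]_d) : R := (u *m w^T) 0 0.

From HB Require Import structures.
From mathcomp Require Import all_boot all_order all_algebra.
From mathcomp Require Import ring lra.
From mathcomp Require Import complex spectral.
Import Order.TTheory GRing.Theory Num.Theory.
Set Implicit Arguments. Unset Strict Implicit. Unset Printing Implicit Defensive.
Local Open Scope ring_scope.

(* Commuting symmetric matrices are diagonalised by one orthonormal basis (we
   take a unitary one over [R[i]]).  If [p_k >= 0] are the squared coordinates
   of [v] in it and [L k i] is the eigenvalue of [X_i] on its [k]-th vector,
   then [a_i = <X_i v, v> = sum_k p_k L_ki], and with [t_k = sum_i a_i L_ki]
   the two sides become [A = sum_i a_i^2 = sum_k p_k t_k] and
   [S = sum_k p_k t_k^2].  So it suffices to bound [A^3 <= K S^2] uniformly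
   in [p >= 0], by induction on the number of rows of [L].  If the rows are
   independent, [p] depends linearly on [a], whence [(sum_k p_k)^2 <= c A],
   and Cauchy-Schwarz [A^2 <= (sum_k p_k) S] concludes.  Otherwise a vector
   [g] with [g L = 0] lets us move [p] without changing [a] and without
   increasing [S] until one weight vanishes, and we drop that row. *)

Section RealInequalities.
Variable R : realFieldType.

Lemma weighted_Cauchy_Schwarz m (w x y : 'I_m -> R) : (forall k, 0 <= w k) ->
  (\sum_k w k * x k * y k) ^+ 2 <= (\sum_k w k * x k ^+ 2) * (\sum_k w k * y k ^+ 2).
Proof.
move=> w_ge0; set B := \sum_k _; set Q := \sum_k w k * x k ^+ 2.
set D := \sum_k w k * y k ^+ 2.
have wsqr_ge0 (z : 'I_m -> R) k : 0 <= w k * z k ^+ 2 by rewrite mulr_ge0 ?sqr_ge0.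
have Q_ge0 : 0 <= Q by exact: sumr_ge0.
have D_ge0 : 0 <= D by exact: sumr_ge0.
(* Lagrange's trick: expand [sum_k w_k (x_k B - y_k Q)^2 >= 0]. *)
have QB_ge0 : 0 <= Q * (Q * D - B ^+ 2).
  have -> : Q * (Q * D - B ^+ 2) = \sum_k w k * (x k * B - y k * Q) ^+ 2.
    have expand k : w k * (x k * B - y k * Q) ^+ 2 = (w k * x k ^+ 2) * B ^+ 2
        - (w k * x k * y k) * (2 * B * Q) + (w k * y k ^+ 2) * Q ^+ 2 by ring.
    rewrite (eq_bigr _ (fun k _ => expand k)) big_split /= sumrB -!mulr_suml.
    by rewrite -/B -/Q -/D; ring.
  by apply: sumr_ge0 => k _; apply: wsqr_ge0 (fun k => x k * B - y k * Q) k.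
have [Q0|Q_neq0] := eqVneq Q 0; last first.
  have : 0 < Q by rewrite lt_def Q_neq0.
  nra.
suff -> : B = 0 by rewrite expr0n mulr_ge0.
have wx0 := psumr_eq0P (fun k _ => wsqr_ge0 x k) Q0.
apply: big1 => k _; move: (wx0 k isT) => /eqP.
rewrite mulf_eq0 sqrf_eq0 => /orP[] /eqP ->; by rewrite ?mul0r ?mulr0 ?mul0r.
Qed.

Lemma cube_le_of_sqr_bounds (a b s c : R) : 0 <= a -> 0 <= s -> 0 <= c ->
  b ^+ 2 <= c * a -> a ^+ 2 <= b * s -> a ^+ 3 <= c * s ^+ 2.
Proof.
move=> a_ge0 s_ge0 c_ge0 hb ha.
have [->|a_neq0] := eqVneq a 0; first by rewrite expr0n mulr_ge0 ?sqr_ge0.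
have a_gt0 : 0 < a by rewrite lt_def a_neq0.
have : a * a ^+ 3 <= a * (c * s ^+ 2) by nra.
by rewrite ler_pM2l.
Qed.

End RealInequalities.

Section Moments.
Variables (R : realFieldType) (d n : nat).
Implicit Types (L : 'M[R]_(d, n)) (p : 'rV[R]_d).

(* [L k i] is the eigenvalue of [X_i] on the [k]-th common eigenvector and
   [p 0 k] the weight of [v] on it, so that [(p *m L) 0 i = <X_i v, v>]. *)
Definition moment_sq L p := \sum_i (p *m L) 0 i ^+ 2.

Definition moment_energy L p := \sum_k p 0 k * (p *m L *m L^T) 0 k ^+ 2.

Lemma moment_sq_ge0 L p : 0 <= moment_sq L p.
Proof. by apply: sumr_ge0 => i _; rewrite sqr_ge0. Qed.

Lemma moment_energy_ge0 L p : (forall k, 0 <= p 0 k) -> 0 <= moment_energy L p.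
Proof. by move=> p_ge0; apply: sumr_ge0 => k _; rewrite mulr_ge0 ?sqr_ge0. Qed.

Lemma moment_sqE L p : moment_sq L p = \sum_k p 0 k * (p *m L *m L^T) 0 k.
Proof.
transitivity ((p *m (L *m (p *m L)^T)) 0 0); last first.
  rewrite mxE; apply: eq_bigr => k _; rewrite !mxE.
  by congr (_ * _); apply: eq_bigr => i _; rewrite !mxE mulrC.
rewrite /moment_sq mulmxA [RHS]mxE; apply: eq_bigr => i _.
by rewrite [X in _ * X]mxE expr2.
Qed.

Lemma moment_energyE L p : moment_energy L p =
  \sum_i \sum_j (p *m L) 0 i * (p *m L) 0 j * \sum_k p 0 k * (L k i * L k j).
Proof.
transitivity (\sum_k \sum_i \sum_j
    p 0 k * ((p *m L) 0 i * L k i) * ((p *m L) 0 j * L k j)).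
  apply: eq_bigr => k _; rewrite mxE expr2 big_distrlr /= mulr_sumr.
  apply: eq_bigr => i _; rewrite mulr_sumr; apply: eq_bigr => j _.
  by rewrite !mxE; ring.
rewrite exchange_big; apply: eq_bigr => i _ /=.
rewrite exchange_big; apply: eq_bigr => j _ /=.
by rewrite mulr_sumr; apply: eq_bigr => k _; ring.
Qed.

Lemma moment_sq_sqr_le L p : (forall k, 0 <= p 0 k) ->
  moment_sq L p ^+ 2 <= (\sum_k p 0 k) * moment_energy L p.
Proof.
move=> p_ge0; have := weighted_Cauchy_Schwarz (fun _ => 1)
  (fun k => (p *m L *m L^T) 0 k) p_ge0.
rewrite moment_sqE /moment_energy.
under eq_bigr do rewrite mulr1.
by under [in X in _ <= X -> _]eq_bigr do rewrite expr1n mulr1.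
Qed.

Lemma mass_sqr_le_moment_sq L (N : 'M[R]_(n, d)) p : L *m N = 1%:M ->
  (\sum_k p 0 k) ^+ 2 <= (\sum_i (\sum_k N i k) ^+ 2) * moment_sq L p.
Proof.
move=> LN; have := weighted_Cauchy_Schwarz (fun i => \sum_k N i k)
  (fun i => (p *m L) 0 i) (fun _ => ler01).
have -> : \sum_k p 0 k = \sum_i 1 * (\sum_k N i k) * (p *m L) 0 i.
  rewrite -{1}[p]mulmx1 -LN mulmxA.
  under eq_bigr do rewrite mxE.
  by rewrite exchange_big; apply: eq_bigr => i _; rewrite mul1r mulrC mulr_sumr.
rewrite /moment_sq; under [in X in _ <= X -> _]eq_bigr do rewrite mul1r.
by under [in X in _ <= _ * X -> _]eq_bigr do rewrite mul1r.
Qed.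

Lemma moment_bound_row_free L : row_free L ->
  exists2 K : R, 0 < K & forall p, (forall k, 0 <= p 0 k) ->
    moment_sq L p ^+ 3 <= K * moment_energy L p ^+ 2.
Proof.
move=> /row_freeP[N LN]; pose c := \sum_i (\sum_k N i k) ^+ 2.
have c_ge0 : 0 <= c by apply: sumr_ge0 => i _; rewrite sqr_ge0.
exists (1 + c) => [|p p_ge0]; first lra.
apply: (cube_le_of_sqr_bounds _ _ _ _ (moment_sq_sqr_le L p_ge0)).
- exact: moment_sq_ge0.
- exact: moment_energy_ge0.
- lra.
apply: le_trans (mass_sqr_le_moment_sq p LN) _.
by rewrite ler_wpM2r ?moment_sq_ge0 // lerDr.
Qed.

Lemma kernel_descent_direction (M : 'M[R]_(d, n)) (u t : 'rV[R]_d) :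
  u != 0 -> u *m M = 0 -> exists g : 'rV[R]_d,
    [/\ g *m M = 0, \sum_k g 0 k * t 0 k ^+ 2 <= 0 & exists k, g 0 k < 0].
Proof.
move=> u_neq0 uM0; pose q (g : 'rV[R]_d) := \sum_k g 0 k * t 0 k ^+ 2.
have qZ c g : q (c *: g) = c * q g.
  by rewrite /q mulr_sumr; apply: eq_bigr => k _; rewrite mxE mulrA.
have kerZ c : (c *: u) *m M = 0 by rewrite -scalemxAl uM0 scaler0.
pose c : R := if q u <= 0 then 1 else -1.
have qcu_le0 : q (c *: u) <= 0.
  rewrite qZ /c; case: ifP => [|/negbT]; rewrite ?mul1r // mulN1r oppr_le0 -ltNge.
  exact: ltW.
have [k cu_lt0|cu_nlt0] := pickP (fun k => (c *: u) 0 k < 0).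
  by exists (c *: u); split => //; exists k.
(* Otherwise [c u] is a nonnegative nonzero vector, so [q (c u) = 0] and [- c u] works. *)
have cu_ge0 k : 0 <= (c *: u) 0 k by rewrite leNgt cu_nlt0.
have qcu_ge0 : 0 <= q (c *: u) by apply: sumr_ge0 => k _; rewrite mulr_ge0 ?sqr_ge0.
have c_neq0 : c != 0 by rewrite /c; case: ifP; rewrite ?oppr_eq0 oner_eq0.
have /rV0Pn[k cuk_neq0] : c *: u != 0 by rewrite scaler_eq0 negb_or c_neq0.
exists (- c *: u); split; first exact: kerZ.
  by change (q (- c *: u) <= 0); rewrite qZ mulNr -qZ oppr_le0.
by exists k; rewrite scaleNr mxE oppr_lt0 lt_def cuk_neq0 cu_ge0.
Qed.

Lemma moment_support_shrink L p (g : 'rV[R]_d) k1 : (forall k, 0 <= p 0 k) ->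
  g *m L = 0 -> \sum_k g 0 k * (p *m L *m L^T) 0 k ^+ 2 <= 0 -> g 0 k1 < 0 ->
  exists k0 (q : 'rV[R]_d), [/\ forall k, 0 <= q 0 k, q 0 k0 = 0,
    q *m L = p *m L & moment_energy L q <= moment_energy L p].
Proof.
move=> p_ge0 gL0 g_descent gk1_lt0.
(* Move from [p] along [g] until the first coordinate hits zero. *)
have [k0 gk0_lt0 s_min] := @arg_minP _ _ _ k1 (fun k => g 0 k < 0)
  (fun k => p 0 k / - g 0 k) gk1_lt0.
pose s := p 0 k0 / - g 0 k0; pose q := p + s *: g.
have s_ge0 : 0 <= s by rewrite divr_ge0 // oppr_ge0 ltW.
have qL : q *m L = p *m L by rewrite mulmxDl -scalemxAl gL0 scaler0 addr0.
exists k0, q; split => //.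
- move=> k; rewrite !mxE; have [gk_lt0|gk_ge0] := ltP (g 0 k) 0.
    have := s_min k gk_lt0; rewrite -/s ler_pdivlMr ?oppr_gt0 // mulrN; lra.
  exact: addr_ge0 (p_ge0 k) (mulr_ge0 s_ge0 gk_ge0).
- by rewrite /q !mxE /s; field; rewrite lt_eqF.
have qE k : q 0 k = p 0 k + s * g 0 k by rewrite !mxE.
rewrite /moment_energy qL; under eq_bigr do rewrite qE mulrDl.
rewrite big_split /= gerDl; under eq_bigr do rewrite -mulrA.
by rewrite -mulr_sumr mulr_ge0_le0.
Qed.

Lemma moment_support_reduction L p : ~~ row_free L -> (forall k, 0 <= p 0 k) ->
  exists k0 (q : 'rV[R]_d), [/\ forall k, 0 <= q 0 k, q 0 k0 = 0,
    q *m L = p *m L & moment_energy L q <= moment_energy L p].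
Proof.
rewrite -kermx_eq0 => /rowV0Pn[u /sub_kermxP uL0 u_neq0] p_ge0.
have [g [gL0 g_descent [k1 gk1_lt0]]] :=
  kernel_descent_direction (p *m L *m L^T) u_neq0 uL0.
exact: moment_support_shrink p_ge0 gL0 g_descent gk1_lt0.
Qed.

End Moments.

Section RowDeletion.
Variables (R : realFieldType) (d n : nat).
Implicit Types (L : 'M[R]_(d, n)) (p : 'rV[R]_d).

Lemma mulmx_col'_row' m (p : 'rV[R]_d) (M : 'M[R]_(d, m)) k :
  p 0 k = 0 -> col' k p *m row' k M = p *m M.
Proof.
move=> pk0; apply/rowP => i; rewrite !mxE [RHS](bigD1_ord k) //= pk0 mul0r add0r.
by apply: eq_bigr => j _; rewrite !mxE.
Qed.

Lemma moment_sq_drop L p k :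
  p 0 k = 0 -> moment_sq (row' k L) (col' k p) = moment_sq L p.
Proof. by move=> pk0; rewrite /moment_sq mulmx_col'_row'. Qed.

Lemma moment_energy_drop L p k :
  p 0 k = 0 -> moment_energy (row' k L) (col' k p) = moment_energy L p.
Proof.
move=> pk0; rewrite /moment_energy mulmx_col'_row' // tr_row'.
rewrite [RHS](bigD1_ord k) //= pk0 mul0r add0r; apply: eq_bigr => j _.
by rewrite !mxE; congr (_ * _ ^+ 2); apply: eq_bigr => i _; rewrite !mxE.
Qed.

End RowDeletion.

Lemma moment_bound (R : realFieldType) d n (L : 'M[R]_(d, n)) :
  exists2 K : R, 0 < K & forall p : 'rV[R]_d, (forall k, 0 <= p 0 k) ->
    moment_sq L p ^+ 3 <= K * moment_energy L p ^+ 2.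
Proof.
elim: d L => [|d IH] L.
  by apply: moment_bound_row_free; rewrite /row_free eqn_leq rank_leq_row.
have [/moment_bound_row_free //|L_dep] := boolP (row_free L).
have /fin_all_exists[K K_spec] : forall k : 'I_d.+1, exists K : R, 0 < K /\
    forall p : 'rV[R]_d, (forall j, 0 <= p 0 j) ->
      moment_sq (row' k L) p ^+ 3 <= K * moment_energy (row' k L) p ^+ 2.
  by move=> k; have [K K_gt0 hK] := IH (row' k L); exists K.
have K_ge0 k : 0 <= K k by have [/ltW] := K_spec k.
have sumK_ge0 : 0 <= \sum_k K k by exact: sumr_ge0.
exists (1 + \sum_k K k) => [|p p_ge0]; first lra.
have [k0 [q [q_ge0 qk0 qL qp_energy]]] := moment_support_reduction L_dep p_ge0.
have [_ hK] := K_spec k0.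
have q'_ge0 j : 0 <= col' k0 q 0 j by rewrite mxE.
have q_sq : moment_sq L q = moment_sq L p by rewrite /moment_sq qL.
have := hK (col' k0 q) q'_ge0.
rewrite moment_sq_drop // moment_energy_drop // q_sq.
move/le_trans; apply; apply: ler_pM.
- exact: K_ge0.
- by rewrite sqr_ge0.
- by rewrite (bigD1 k0) //= addrCA lerDl addr_ge0 // sumr_ge0.
- by rewrite lerXn2r ?nnegrE ?moment_energy_ge0.
Qed.

Section CommutingHermitian.
Variable R : rcfType.
Local Open Scope sesquilinear_scope.
Local Notation C := R[i].
Local Notation fC := (real_complex R).

Lemma conj_real_complex (x : R) : (fC x)^* = fC x.
Proof. by apply/CrealP/complex_realP; exists x. Qed.

Lemma self_conj_complexRe (z : C) : z^* = z -> z = fC (complex.Re z).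
Proof. by move=> /CrealP/RRe_real. Qed.

Lemma real_trmxC m p (A : 'M[R]_(m, p)) : (map_mx fC A)^t* = (map_mx fC A)^T.
Proof. by apply/matrixP => i j; rewrite !mxE conj_real_complex. Qed.

Lemma hermitian_trig_diag d (T : 'M[C]_d) : T^t* = T -> is_trig_mx T ->
  T = diag_mx (map_mx fC (\row_k complex.Re (T k k))).
Proof.
move=> T_herm /is_trig_mxP T_trig; have T_conj k l : T k l = (T l k)^*.
  by rewrite -{1}T_herm !mxE.
apply/matrixP => k l; rewrite !mxE; have [<-|kl] := eqVneq k l.
  by rewrite mulr1n -self_conj_complexRe // -T_conj.
rewrite mulr0n; case: (ltngtP k l) => [lt_kl|lt_lk|/val_inj eq_kl].
- by rewrite T_trig.
- by rewrite T_conj T_trig ?conjC0.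
- by rewrite eq_kl eqxx in kl.
Qed.

Lemma commuting_hermitian_codiag d n (A : 'I_n -> 'M[C]_d) :
  (forall i, (A i)^t* = A i) -> (forall i j, A i *m A j = A j *m A i) ->
  exists2 P : 'M[C]_d, P \is unitarymx & exists L : 'M[R]_(d, n),
    forall i, P *m A i *m P^t* = diag_mx (map_mx fC (col i L)^T).
Proof.
move=> A_herm A_comm.
have A_comm_in : {in [seq A i | i <- enum 'I_n] &, forall B B', comm_mx B B'}.
  by move=> _ _ /mapP[i _ ->] /mapP[j _ ->]; apply: A_comm.
have [P P_unitary /allP P_trig] := cotrigonalization A_comm_in.
exists P => //; pose T i := P *m A i *m P^t*.
exists (\matrix_(k, i) complex.Re (T i k k)) => i.
have T_trig : is_trig_mx (T i).
  by have := P_trig _ (map_f A (mem_enum _ i)); rewrite /= /similar_to conjymx.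
have T_herm : (T i)^t* = T i by rewrite /T !trmx_mul !map_mxM trmxCK A_herm mulmxA.
rewrite [LHS](hermitian_trig_diag T_herm T_trig); congr (diag_mx (map_mx _ _)).
by apply/rowP => k; rewrite !mxE.
Qed.

Lemma unitary_conj_form d (P : 'M[C]_d) (x : 'rV[C]_d) (M : 'M[C]_d) :
  P \is unitarymx ->
  x *m M *m x^t* = (x *m P^t*) *m (P *m M *m P^t*) *m (x *m P^t*)^t*.
Proof.
by move=> P_unitary; rewrite trmx_mul map_mxM trmxCK !mulmxA !mulmxKtV.
Qed.

Lemma form_diag_mx d (w : 'rV[C]_d) (mu : 'rV[R]_d) :
  (w *m diag_mx (map_mx fC mu) *m w^t*) 0 0 =
  fC (\sum_k complex.Re (w 0 k * (w 0 k)^*) * mu 0 k).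
Proof.
rewrite mul_mx_diag !mxE rmorph_sum; apply: eq_bigr => k _.
rewrite !mxE rmorphM /= -(@self_conj_complexRe (w 0 k * (w 0 k)^*)).
  by rewrite mulrAC.
by rewrite rmorphM /= conjCK mulrC.
Qed.

Lemma symmetric_commuting_moments d n (X : 'I_n -> 'M[R]_d) :
  (forall i, (X i)^T = X i) -> (forall i j, X i *m X j = X j *m X i) ->
  exists L : 'M[R]_(d, n), forall v : 'rV[R]_d, exists p : 'rV[R]_d,
    [/\ forall k, 0 <= p 0 k,
        forall i, ip (v *m X i) v = (p *m L) 0 i &
        forall i j, ip (v *m X i) (v *m X j) = \sum_k p 0 k * (L k i * L k j)].
Proof.
move=> X_sym X_comm; pose Xc i := map_mx fC (X i).
have Xc_herm i : (Xc i)^t* = Xc i by rewrite /Xc real_trmxC map_trmx X_sym.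
have Xc_comm i j : Xc i *m Xc j = Xc j *m Xc i by rewrite -!map_mxM X_comm.
have [P P_unitary [L PXP]] := commuting_hermitian_codiag Xc_herm Xc_comm.
exists L => v; pose w := map_mx fC v *m P^t*.
pose p : 'rV[R]_d := \row_k complex.Re (w 0 k * (w 0 k)^*); exists p.
have form (M : 'M[R]_d) (mu : 'rV[R]_d) :
    P *m map_mx fC M *m P^t* = diag_mx (map_mx fC mu) ->
    (v *m M *m v^T) 0 0 = \sum_k p 0 k * mu 0 k.
  move=> PMP; apply: complexI.
  transitivity ((map_mx fC (v *m M *m v^T)) 0 0); first by rewrite [RHS]mxE.
  rewrite !map_mxM -map_trmx -real_trmxC.
  rewrite (unitary_conj_form _ _ P_unitary) PMP form_diag_mx.
  by congr fC; apply: eq_bigr => k _; rewrite /p [X in _ = X * _]mxE.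
split.
- move=> k; rewrite /p mxE; have := mul_conjC_ge0 (w 0 k).
  by rewrite (@self_conj_complexRe (w 0 k * (w 0 k)^*)) ?lecR // rmorphM /= conjCK mulrC.
- move=> i; rewrite /ip (form _ _ (PXP i)) [RHS]mxE.
  by apply: eq_bigr => k _; rewrite !mxE.
- move=> i j; have PXXP : P *m map_mx fC (X i *m X j) *m P^t* =
      diag_mx (map_mx fC (\row_k (L k i * L k j))).
    have -> : P *m map_mx fC (X i *m X j) *m P^t* =
        (P *m Xc i *m P^t*) *m (P *m Xc j *m P^t*).
      by rewrite map_mxM !mulmxA mulmxKtV.
    rewrite !PXP mulmx_diag; congr (diag_mx _).
    by apply/rowP => k; rewrite !mxE rmorphM.
  rewrite /ip trmx_mul X_sym mulmxA -(mulmxA v) (form _ _ PXXP).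
  by apply: eq_bigr => k _; rewrite [X in _ * X]mxE.
Qed.

End CommutingHermitian.

Theorem theorem19 (R : rcfType) (d n : nat) (X : 'I_n -> 'M[R]_d)
  (hsym : forall i, (X i)^T = X i)
  (hcomm : forall i j, X i *m X j = X j *m X i) :
  exists2 C : R, 0 < C &
    forall v : 'rV[R]_d,
      (\sum_(i < n) ip (v *m X i) v ^+ 2) ^+ 3 <=
      C * (\sum_(i < n) \sum_(j < n)
             ip (v *m X i) v * ip (v *m X j) v * ip (v *m X i) (v *m X j)) ^+ 2.
Proof.
have [L moments] := symmetric_commuting_moments hsym hcomm.
have [K K_gt0 bound] := moment_bound L.
exists K => // v; have [p [p_ge0 ip_moment ip_cross]] := moments v.
have -> : \sum_(i < n) ip (v *m X i) v ^+ 2 = moment_sq L p.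
  by apply: eq_bigr => i _; rewrite ip_moment.
have -> : \sum_(i < n) \sum_(j < n)
    ip (v *m X i) v * ip (v *m X j) v * ip (v *m X i) (v *m X j) = moment_energy L p.
  rewrite moment_energyE; apply: eq_bigr => i _; apply: eq_bigr => j _.
  by rewrite !ip_moment ip_cross.
exact: bound.
Qed.
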